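(* Let $1<R<\infty$, $\mathbb A=A(1,R)$, $h\in\mathcal H(\mathbb A,\ast)$, and $U(\rho)=\frac1{2\pi\rho}\int_{|z|=\rho}|h|^2|dz|$ for $1<\rho<R$. Then $\rho\mapsto\rho\,\dot U(\rho)$ is strictly increasing on $(1,R)$, $U(\rho)>1$ for $1<\rho<R$, the limit $\dot U(1):=\lim_{\rho\searrow1}\rho\,\dot U(\rho)$ exists and satisfies $0\leqslant\dot U(1)<\infty$, and for every $1<\rho<R$ $$\frac1\pi\iint_{A(1,\rho)}|Dh|^2=\rho\,\dot U(\rho)-\dot U(1)<\infty .$$
   Context: $A(a,b)=\{a<|z|<b\}$. $\mathcal H(\mathbb A,\ast)$ denotes the set of sense-preserving harmonic homeomorphisms $h$ of $\mathbb A=A(1,R)$ onto some doubly connected domain whose inner boundary is the unit circle (the bounded complementary component is the closed unit disk), preserving the order of boundary components; in particular $|h(z)|\to1$ as $|z|\searrow1$. $\dot U$ is the derivative in $\rho$; $|Dh|^2=2(|h_z|^2+|h_{\bar z}|^2)$. *)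

From Stdlib Require Import Reals Lra ClassicalEpsilon.
Open Scope R_scope.

(* Riemann integral of f over [a,b] (a <= b); returns 0 if f is not
   Riemann integrable (never the case below: all integrands are continuous). *)
Definition Rint (f : R -> R) (a b : R) : R :=
  match excluded_middle_informative
          (exists pr : Riemann_integrable f a b, True) with
  | left H => RiemannInt (proj1_sig (constructive_indefinite_description _ H))
  | right _ => 0
  end.

(* Points of the plane are pairs (x,y), z = x + i y; a map h = u + i v. *)
Definition ann (a b : R) (x y : R) : Prop :=
  a < sqrt (x ^ 2 + y ^ 2) < b.

Definition pd_x (D : R -> R -> Prop) (f fx : R -> R -> R) : Prop :=
  forall x y, D x y -> derivable_pt_lim (fun t => f t y) x (fx x y).
Definition pd_y (D : R -> R -> Prop) (f fy : R -> R -> R) : Prop :=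
  forall x y, D x y -> derivable_pt_lim (fun t => f x t) y (fy x y).

Definition cont2 (D : R -> R -> Prop) (f : R -> R -> R) : Prop :=
  forall x y, D x y -> forall eps, 0 < eps -> exists delta, 0 < delta /\
    forall x' y', D x' y' -> (x' - x) ^ 2 + (y' - y) ^ 2 < delta ^ 2 ->
      Rabs (f x' y' - f x y) < eps.

Definition C2_harmonic (D : R -> R -> Prop) (f fx fy : R -> R -> R) : Prop :=
  pd_x D f fx /\ pd_y D f fy /\ cont2 D f /\ cont2 D fx /\ cont2 D fy /\
  exists fxx fxy fyx fyy : R -> R -> R,
    pd_x D fx fxx /\ pd_y D fx fxy /\ pd_x D fy fyx /\ pd_y D fy fyy /\
    cont2 D fxx /\ cont2 D fxy /\ cont2 D fyx /\ cont2 D fyy /\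
    (forall x y, D x y -> fxx x y + fyy x y = 0).

(* h = u + i v belongs to H(A(1,Rr), * ); ux uy vx vy are its partials. *)
Definition in_H_star (Rr : R) (u v ux uy vx vy : R -> R -> R) : Prop :=
  let A := ann 1 Rr in
  C2_harmonic A u ux uy /\ C2_harmonic A v vx vy /\
  (forall x y x' y', A x y -> A x' y' ->
      u x y = u x' y' -> v x y = v x' y' -> x = x' /\ y = y') /\
  (* inverse continuous: homeomorphism onto its image *)
  (forall x y, A x y -> forall eps, 0 < eps -> exists delta, 0 < delta /\
     forall x' y', A x' y' ->
       (u x' y' - u x y) ^ 2 + (v x' y' - v x y) ^ 2 < delta ^ 2 ->
       (x' - x) ^ 2 + (y' - y) ^ 2 < eps ^ 2) /\
  (* sense-preserving: positive Jacobian *)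
  (forall x y, A x y -> ux x y * vy x y - uy x y * vx x y > 0) /\
  (forall x y, A x y -> 1 < sqrt (u x y ^ 2 + v x y ^ 2)) /\
  (* order of boundary components: |h(z)| -> 1 as |z| -> 1+ *)
  (forall eps, 0 < eps -> exists delta, 0 < delta /\
     forall x y, A x y -> sqrt (x ^ 2 + y ^ 2) < 1 + delta ->
       Rabs (sqrt (u x y ^ 2 + v x y ^ 2) - 1) < eps).

(* U(rho) = (1/(2 pi rho)) int_{|z|=rho} |h|^2 |dz| *)
Definition U_mean (u v : R -> R -> R) (rho : R) : R :=
  / (2 * PI) * Rint (fun t => u (rho * cos t) (rho * sin t) ^ 2
                              + v (rho * cos t) (rho * sin t) ^ 2) 0 (2 * PI).

(* |Dh|^2 = 2(|h_z|^2 + |h_zbar|^2) = ux^2 + uy^2 + vx^2 + vy^2 *)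
Definition Dh2 (ux uy vx vy : R -> R -> R) (x y : R) : R :=
  ux x y ^ 2 + uy x y ^ 2 + vx x y ^ 2 + vy x y ^ 2.

(* (1/pi) * integral of |Dh|^2 over A(a,rho), in polar coordinates *)
Definition area_int (ux uy vx vy : R -> R -> R) (a rho : R) : R :=
  / PI * Rint (fun r => r * Rint (fun t => Dh2 ux uy vx vy (r * cos t) (r * sin t))
                                  0 (2 * PI)) a rho.

From Stdlib Require Import Reals Lra Psatz Classical ClassicalEpsilon FunctionalExtensionality.
From Coquelicot Require Import Coquelicot.
Open Scope R_scope.

(* Write h = u + i v and U(rho) = (1/2pi) int_0^{2pi} |h(rho e^{it})|^2 dt.  Since u and v
   are harmonic, the polar form of the Laplacian gives, pointwise on each circle,
       r d/dr (r d/dr |h|^2) + d^2/dt^2 |h|^2 = 2 r^2 |Dh|^2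
   (|Dh|^2 = ux^2 + uy^2 + vx^2 + vy^2),
   and the angular term integrates to zero over a full turn.  Differentiating under the
   integral sign twice therefore yields  (rho U'(rho))' = (1/pi) rho int_{|z|=rho} |Dh|^2,
   which is positive because h is sense-preserving.  Hence rho U'(rho) is strictly
   increasing, its integral form is the area integral of |Dh|^2, U > 1 because h maps
   into the exterior of the unit disk, and U(rho) -> 1 as rho -> 1 forces rho U'(rho) >= 0;
   an increasing function bounded below has a limit at the left end of its interval. *)

Definition cont_on (f : R -> R) (a b : R) : Prop :=
  forall x, a <= x <= b -> continuity_pt f x.

Lemma cont_on_integrable f a b : a <= b -> cont_on f a b -> Riemann_integrable f a b.
Proof. intros; apply continuity_implies_RiemannInt; auto. Qed.

Lemma cont_on_const c a b : cont_on (fun _ => c) a b.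
Proof. intros x _. apply continuity_pt_const. intros ? ?; reflexivity. Qed.

Lemma cont_on_plus f g a b :
  cont_on f a b -> cont_on g a b -> cont_on (fun x => f x + g x) a b.
Proof. intros Hf Hg x Hx. apply (continuity_pt_plus f g); auto. Qed.

Lemma cont_on_mult f g a b :
  cont_on f a b -> cont_on g a b -> cont_on (fun x => f x * g x) a b.
Proof. intros Hf Hg x Hx. apply (continuity_pt_mult f g); auto. Qed.

Lemma Rint_RiemannInt f a b (pr : Riemann_integrable f a b) : Rint f a b = RiemannInt pr.
Proof.
  unfold Rint; destruct excluded_middle_informative as [H|H].
  - apply RiemannInt_P5.
  - exfalso; apply H; exists pr; auto.
Qed.

Lemma Rint_ext f g a b : (forall x, f x = g x) -> Rint f a b = Rint g a b.
Proof. intros H. f_equal. apply functional_extensionality; auto. Qed.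

Lemma Rint_const c a b : Rint (fun _ => c) a b = c * (b - a).
Proof.
  change (fun _ : R => c) with (fct_cte c).
  rewrite (Rint_RiemannInt _ _ _ (RiemannInt_P14 a b c)). apply RiemannInt_P15.
Qed.

Lemma Rint_lin f g a b l : a <= b -> cont_on f a b -> cont_on g a b ->
  Rint (fun x => f x + l * g x) a b = Rint f a b + l * Rint g a b.
Proof.
  intros Hab Hf Hg.
  pose proof (cont_on_integrable _ _ _ Hab Hf) as pf.
  pose proof (cont_on_integrable _ _ _ Hab Hg) as pg.
  rewrite (Rint_RiemannInt _ _ _ pf), (Rint_RiemannInt _ _ _ pg),
          (Rint_RiemannInt _ _ _ (RiemannInt_P10 l pf pg)).
  apply RiemannInt_P13.
Qed.

Lemma Rint_scal f a b l : a <= b -> cont_on f a b ->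
  Rint (fun x => l * f x) a b = l * Rint f a b.
Proof.
  intros Hab Hf. transitivity (Rint (fun x => 0 + l * f x) a b).
  - apply Rint_ext; intros; ring.
  - rewrite Rint_lin, Rint_const; auto using cont_on_const; ring.
Qed.

Lemma Rint_le f g a b : a <= b -> cont_on f a b -> cont_on g a b ->
  (forall x, a <= x <= b -> f x <= g x) -> Rint f a b <= Rint g a b.
Proof.
  intros Hab Hf Hg H.
  rewrite (Rint_RiemannInt _ _ _ (cont_on_integrable _ _ _ Hab Hf)),
          (Rint_RiemannInt _ _ _ (cont_on_integrable _ _ _ Hab Hg)).
  apply RiemannInt_P19; auto. intros; apply H; lra.
Qed.

(* A continuous function exceeding c pointwise has integral exceeding c (b - a):
   it attains its minimum on the compact interval. *)
Lemma Rint_gt f a b c : a < b -> cont_on f a b ->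
  (forall x, a <= x <= b -> c < f x) -> c * (b - a) < Rint f a b.
Proof.
  intros Hab Hf H.
  destruct (continuity_ab_min f a b ltac:(lra) Hf) as [m [Hm1 Hm2]].
  apply Rlt_le_trans with (f m * (b - a)).
  - apply Rmult_lt_compat_r; [lra | apply H; auto].
  - rewrite <- Rint_const. apply Rint_le; auto using cont_on_const; lra.
Qed.

Lemma Rint_abs_bound f a b M : a <= b -> cont_on f a b ->
  (forall x, a <= x <= b -> Rabs (f x) <= M) -> Rabs (Rint f a b) <= M * (b - a).
Proof.
  intros Hab Hf H.
  pose proof (cont_on_integrable _ _ _ Hab Hf) as pf.
  rewrite (Rint_RiemannInt _ _ _ pf).
  eapply Rle_trans; [apply (RiemannInt_P17 pf (RiemannInt_P16 pf) Hab) |].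
  apply (RiemannInt_const_bound (RiemannInt_P16 pf) (l := -M) (u := M) Hab).
  intros x Hx. pose proof (H x ltac:(lra)). pose proof (Rabs_pos (f x)). lra.
Qed.

Lemma Rint_FTC f f' a b : a <= b ->
  (forall x, a <= x <= b -> derivable_pt_lim f x (f' x)) ->
  cont_on f' a b -> Rint f' a b = f b - f a.
Proof.
  intros Hab Hd Hc.
  rewrite (Rint_RiemannInt _ _ _ (cont_on_integrable _ _ _ Hab Hc)).
  rewrite (RiemannInt_P20 Hab (FTC_P1 Hab Hc)).
  assert (Hanti : antiderivative f' f a b).
  { split; auto. intros x Hx. exists (exist _ (f' x) (Hd x Hx)). reflexivity. }
  destruct (antiderivative_Ucte _ _ _ _ _ (RiemannInt_P29 Hab Hc) Hanti) as [c Hc'].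
  rewrite (Hc' b), (Hc' a); lra.
Qed.

Lemma derivable_pt_lim_eq f x l l' : derivable_pt_lim f x l -> l = l' -> derivable_pt_lim f x l'.
Proof. intros H <-; exact H. Qed.

Lemma derivable_pt_lim_sq f x l :
  derivable_pt_lim f x l -> derivable_pt_lim (fun s => f s ^ 2) x (2 * f x * l).
Proof.
  intros H. eapply derivable_pt_lim_eq.
  - apply (derivable_pt_lim_mult f (fun s => f s ^ 1)); [exact H |].
    apply (derivable_pt_lim_mult f (fun _ => 1)); [exact H | apply derivable_pt_lim_const].
  - cbn; ring.
Qed.

Lemma derivable_pt_lim_scal_l f c x l :
  derivable_pt_lim f x l -> derivable_pt_lim (fun s => c * f s) x (c * l).
Proof.
  intros H. eapply derivable_pt_lim_eq;
    [apply (derivable_pt_lim_mult (fun _ => c) f); [apply derivable_pt_lim_const | exact H] | ring].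
Qed.

Lemma increasing_limit_left g lo hi : lo < hi ->
  (forall x y, lo < x -> x < y -> y < hi -> g x < g y) ->
  (forall x, lo < x < hi -> 0 <= g x) ->
  exists L, 0 <= L /\ forall c, lo < c <= hi -> limit1_in g (fun x => lo < x < c) L lo.
Proof.
  intros Hlohi Hinc Hpos.
  set (E := fun y => exists x, lo < x < hi /\ y = - g x).
  destruct (completeness E) as [m [Hub Hlub]].
  { exists 0. intros y [x [Hx ->]]. pose proof (Hpos x Hx). lra. }
  { exists (- g ((lo + hi) / 2)), ((lo + hi) / 2). split; [lra | reflexivity]. }
  assert (Hbelow : forall x, lo < x < hi -> - m <= g x).
  { intros x Hx. assert (- g x <= m) by (apply Hub; exists x; auto). lra. }
  assert (Happrox : forall eps, 0 < eps -> exists x, lo < x < hi /\ g x < - m + eps).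
  { intros eps Heps. apply not_all_not_ex. intros Hnone.
    assert (m <= m - eps) by (apply Hlub; intros y [x [Hx ->]];
      apply Rnot_lt_le; intros Hlt; apply (Hnone x); split; [exact Hx | lra]).
    lra. }
  exists (- m). split.
  - apply Ropp_0_ge_le_contravar, Rle_ge, Hlub. intros y [x [Hx ->]]. pose proof (Hpos x Hx). lra.
  - intros c Hc eps Heps. destruct (Happrox eps Heps) as [x1 [Hx1 Hg1]].
    exists (x1 - lo). split; [lra |]. intros x [Hx Hdx]. cbn in Hdx |- *. unfold Rdist in *.
    rewrite Rabs_pos_eq in Hdx by lra.
    pose proof (Hbelow x ltac:(lra)). pose proof (Hinc x x1 ltac:(lra) ltac:(lra) ltac:(lra)).
    rewrite Rabs_pos_eq; lra.
Qed.

Lemma limit1_in_shift_opp (f g : R -> R) D L c x0 :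
  (forall x, D x -> f x = c - g x) -> limit1_in g D L x0 -> limit1_in f D (c - L) x0.
Proof.
  intros Hfg Hg eps Heps. destruct (Hg eps Heps) as [d [Hd Hclose]].
  exists d. split; [exact Hd |]. intros x [Hx Hdx]. cbn in *. unfold Rdist in *.
  rewrite Hfg by exact Hx. replace (c - g x - (c - L)) with (- (g x - L)) by ring.
  rewrite Rabs_Ropp. apply Hclose; auto.
Qed.

Lemma norm_shift x y x' y' :
  Rabs (sqrt (x' ^ 2 + y' ^ 2) - sqrt (x ^ 2 + y ^ 2))
    <= 2 * Rmax (Rabs (x' - x)) (Rabs (y' - y)).
Proof.
  assert (Htri : forall p q p' q', sqrt (p' ^ 2 + q' ^ 2)
            <= sqrt (p ^ 2 + q ^ 2) + sqrt ((p' - p) ^ 2 + (q' - q) ^ 2)).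
  { intros p q p' q'. pose proof (Cmod_triangle (p, q) (p' - p, q' - q)) as T.
    unfold Cmod, Cplus in T; cbn [fst snd] in T.
    replace (p + (p' - p)) with p' in T by ring. replace (q + (q' - q)) with q' in T by ring.
    exact T. }
  assert (Hs2 : sqrt 2 < 2).
  { rewrite <- (sqrt_square 2) at 2 by lra. apply sqrt_lt_1_alt; lra. }
  assert (Hd : sqrt ((x' - x) ^ 2 + (y' - y) ^ 2) <= 2 * Rmax (Rabs (x' - x)) (Rabs (y' - y))).
  { eapply Rle_trans; [apply (sqrt_plus_sqr (x' - x) (y' - y)) |].
    apply Rmult_le_compat_r; [| lra].
    eapply Rle_trans; [apply Rabs_pos | apply Rmax_l]. }
  pose proof (Htri x y x' y') as Hup. pose proof (Htri x' y' x y) as Hdown.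
  replace ((x - x') ^ 2 + (y - y') ^ 2) with ((x' - x) ^ 2 + (y' - y) ^ 2) in Hdown by ring.
  apply Rabs_le; lra.
Qed.

Lemma ann_box a b x y : ann a b x y ->
  exists d : posreal, forall x' y',
    Rabs (x' - x) < d -> Rabs (y' - y) < d -> ann a b x' y'.
Proof.
  unfold ann. intros [H1 H2].
  assert (Hd : 0 < Rmin (sqrt (x ^ 2 + y ^ 2) - a) (b - sqrt (x ^ 2 + y ^ 2)) / 2)
    by (unfold Rmin; destruct Rle_dec; lra).
  exists (mkposreal _ Hd); cbn [pos]. intros x' y' Hx Hy.
  pose proof (norm_shift x y x' y') as Hn.
  set (N := sqrt (x ^ 2 + y ^ 2)) in *. set (N' := sqrt (x' ^ 2 + y' ^ 2)) in *.
  pose proof (Rmin_l (N - a) (b - N)). pose proof (Rmin_r (N - a) (b - N)).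
  assert (Rmax (Rabs (x' - x)) (Rabs (y' - y)) < Rmin (N - a) (b - N) / 2)
    by (unfold Rmax; destruct Rle_dec; lra).
  apply Rabs_le_between in Hn. lra.
Qed.

Lemma cont2_continuity_2d a b g x y :
  cont2 (ann a b) g -> ann a b x y -> continuity_2d_pt g x y.
Proof.
  intros Hg Hxy eps. destruct (ann_box a b x y Hxy) as [d Hd].
  destruct (Hg x y Hxy eps (cond_pos eps)) as [delta [Hdelta Hclose]].
  assert (Hm : 0 < Rmin d (delta / 2)) by (apply Rmin_pos; [apply cond_pos | lra]).
  exists (mkposreal _ Hm); cbn [pos]. intros x' y' Hx Hy.
  pose proof (Rmin_l d (delta / 2)). pose proof (Rmin_r d (delta / 2)).
  apply Hclose; [apply Hd; lra |].
  rewrite <- (pow2_abs (x' - x)), <- (pow2_abs (y' - y)).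
  pose proof (Rabs_pos (x' - x)). pose proof (Rabs_pos (y' - y)). nra.
Qed.

Lemma continuity_2d_pt_comp2 (g X Y : R -> R -> R) r t :
  continuity_2d_pt g (X r t) (Y r t) -> continuity_2d_pt X r t -> continuity_2d_pt Y r t ->
  continuity_2d_pt (fun r' t' => g (X r' t') (Y r' t')) r t.
Proof.
  intros Hg HX HY eps. destruct (Hg eps) as [d Hd].
  destruct (HX d) as [d1 H1]. destruct (HY d) as [d2 H2].
  exists (mkposreal _ (Rmin_pos _ _ (cond_pos d1) (cond_pos d2))); cbn [pos].
  intros r' t' Hr Ht. pose proof (Rmin_l d1 d2). pose proof (Rmin_r d1 d2).
  apply Hd; [apply H1 | apply H2]; lra.
Qed.

Lemma continuity_2d_pt_snd (G : R -> R -> R) r t :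
  continuity_2d_pt G r t -> continuity_pt (G r) t.
Proof.
  intros HG. apply continuity_pt_locally. intros eps.
  exact (locally_2d_1d_const_x _ r t (HG eps)).
Qed.

Lemma continuity_2d_pt_sq (G : R -> R -> R) r t :
  continuity_2d_pt G r t -> continuity_2d_pt (fun r' t' => G r' t' ^ 2) r t.
Proof.
  intros HG. apply (continuity_2d_pt_ext (fun r' t' => G r' t' * G r' t')); [intros; ring |].
  apply continuity_2d_pt_mult; exact HG.
Qed.

Lemma continuity_2d_pt_cos r t : continuity_2d_pt (fun _ t' => cos t') r t.
Proof.
  apply (continuity_1d_2d_pt_comp cos (fun _ t' => t')).
  apply continuity_cos. apply continuity_2d_pt_id2.
Qed.

Lemma continuity_2d_pt_sin r t : continuity_2d_pt (fun _ t' => sin t') r t.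
Proof.
  apply (continuity_1d_2d_pt_comp sin (fun _ t' => t')).
  apply continuity_sin. apply continuity_2d_pt_id2.
Qed.

Lemma C1_differentiable a b f fx fy x y :
  pd_x (ann a b) f fx -> pd_y (ann a b) f fy -> cont2 (ann a b) fx -> ann a b x y ->
  differentiable_pt_lim f x y (fx x y) (fy x y).
Proof.
  intros Hfx Hfy Hcx Hxy. apply filterdiff_differentiable_pt_lim.
  destruct (ann_box a b x y Hxy) as [d Hd].
  eapply filterdiff_ext_lin.
  - apply (is_derive_filterdiff f x y fx).
    + apply (proj1 (locally_2d_locally (fun u v => is_derive (fun z => f z v) u (fx u v)) x y)).
      exists d. intros x' y' Hx' Hy'.
      apply is_derive_Reals, Hfx, Hd; assumption.
    + apply is_derive_Reals, Hfy, Hxy.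
    + apply (continuity_2d_pt_filterlim (fun u v => fx u v)).
      exact (cont2_continuity_2d a b fx x y Hcx Hxy).
  - intros [p q]. reflexivity.
Qed.

Lemma Rint_RInt f a b : a <= b -> cont_on f a b -> Rint f a b = RInt f a b.
Proof.
  intros Hab Hf. pose proof (cont_on_integrable f a b Hab Hf) as pr.
  rewrite (Rint_RiemannInt _ _ _ pr). symmetry. apply RInt_Reals.
Qed.

Lemma cont_on_section (G : R -> R -> R) r T :
  (forall t, continuity_2d_pt G r t) -> cont_on (G r) 0 T.
Proof. intros HG t _. apply continuity_2d_pt_snd, HG. Qed.

Lemma param_integral_continuous (G : R -> R -> R) lo hi T r0 :
  lo < r0 < hi -> 0 <= T -> (forall r t, lo < r < hi -> continuity_2d_pt G r t) ->
  continuity_pt (fun r => Rint (G r) 0 T) r0.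
Proof.
  intros Hr0 HT HG. apply continuity_pt_locally. intros eps.
  assert (He : 0 < eps / (T + 1)) by (apply Rdiv_lt_0_compat; [apply cond_pos | lra]).
  destruct (uniform_continuity_2d_1d' G 0 T r0 (fun t _ => HG r0 t Hr0) (mkposreal _ He))
    as [delta Hdelta]; cbn [pos] in Hdelta.
  apply (locally_interval _ r0 (Rmax lo (r0 - delta)) (Rmin hi (r0 + delta)));
    cbn [Rbar_lt]; [apply Rmax_lub_lt | apply Rmin_glb_lt |]; try (pose proof (cond_pos delta); lra).
  intros r Hlo Hhi. cbn [Rbar_lt] in Hlo, Hhi.
  pose proof (Rmax_l lo (r0 - delta)). pose proof (Rmax_r lo (r0 - delta)).
  pose proof (Rmin_l hi (r0 + delta)). pose proof (Rmin_r hi (r0 + delta)).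
  assert (Cr : cont_on (G r) 0 T) by (apply cont_on_section; intros; apply HG; lra).
  assert (C0 : cont_on (G r0) 0 T) by (apply cont_on_section; intros; apply HG; lra).
  replace (Rint (G r) 0 T - Rint (G r0) 0 T) with (Rint (fun t => G r t + (-1) * G r0 t) 0 T)
    by (rewrite Rint_lin; auto; ring).
  eapply Rle_lt_trans.
  - apply (Rint_abs_bound _ 0 T (eps / (T + 1))); auto.
    + apply cont_on_plus, cont_on_mult; auto using cont_on_const.
    + intros t Ht. left. replace (G r t + -1 * G r0 t) with (G r t - G r0 t) by ring.
      apply Hdelta; try lra. rewrite Rminus_eq_0, Rabs_R0. apply cond_pos.
  - pose proof (cond_pos eps).
    apply Rlt_le_trans with (eps / (T + 1) * (T + 1)); [apply Rmult_lt_compat_l; lra |].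
    right; field; lra.
Qed.

Lemma param_integral_derivable (G Gr : R -> R -> R) lo hi T r0 :
  lo < r0 < hi -> 0 <= T ->
  (forall r t, lo < r < hi -> derivable_pt_lim (fun s => G s t) r (Gr r t)) ->
  (forall r t, lo < r < hi -> continuity_2d_pt G r t) ->
  (forall r t, lo < r < hi -> continuity_2d_pt Gr r t) ->
  derivable_pt_lim (fun r => Rint (G r) 0 T) r0 (Rint (Gr r0) 0 T).
Proof.
  intros Hr0 HT Hd HG HGr.
  assert (Hnear : forall P : R -> Prop, (forall r, lo < r < hi -> P r) -> locally r0 P).
  { intros P HP. apply (locally_interval _ r0 lo hi); cbn [Rbar_lt]; try lra.
    intros r H1 H2; apply HP; cbn [Rbar_lt] in *; lra. }
  assert (HDer : forall r t, lo < r < hi -> Derive (fun s => G s t) r = Gr r t)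
    by (intros; apply is_derive_unique, is_derive_Reals, Hd; auto).
  apply is_derive_Reals.
  rewrite (Rint_RInt (Gr r0)) by (auto; apply cont_on_section; intros; apply HGr; auto).
  apply (is_derive_ext_loc (fun r => RInt (G r) 0 T)).
  { apply Hnear. intros r Hr. symmetry. apply Rint_RInt; auto.
    apply cont_on_section; intros; apply HG; auto. }
  rewrite <- (RInt_ext (fun t => Derive (fun s => G s t) r0)) by (intros; apply HDer; auto).
  apply (is_derive_RInt_param G 0 T r0).
  - apply Hnear. intros r Hr t _. eexists. apply is_derive_Reals, Hd; auto.
  - intros t _. apply (continuity_2d_pt_ext_loc Gr).
    + assert (Hm : 0 < Rmin (r0 - lo) (hi - r0)) by (apply Rmin_pos; lra).
      exists (mkposreal _ Hm); cbn [pos]. intros r t' Hr _.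
      pose proof (Rmin_l (r0 - lo) (hi - r0)). pose proof (Rmin_r (r0 - lo) (hi - r0)).
      apply Rabs_def2 in Hr. symmetry. apply HDer; lra.
    + apply HGr; auto.
  - apply Hnear. intros r Hr. apply (ex_RInt_continuous (V := R_CompleteNormedModule)). intros t _.
    apply continuity_pt_filterlim, continuity_2d_pt_snd, HG; auto.
Qed.

Definition pol (f : R -> R -> R) (r t : R) : R := f (r * cos t) (r * sin t).

Lemma pol_norm r t : 0 <= r -> sqrt ((r * cos t) ^ 2 + (r * sin t) ^ 2) = r.
Proof.
  intros Hr. transitivity (sqrt (r ^ 2)); [f_equal | apply sqrt_pow2, Hr].
  pose proof (sin2_cos2 t) as E. unfold Rsqr in E.
  transitivity (r ^ 2 * (sin t * sin t + cos t * cos t)); [ring | rewrite E; ring].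
Qed.

Lemma pol_ann a b r t : 0 <= a -> a < r < b -> ann a b (r * cos t) (r * sin t).
Proof. intros Ha Hr. unfold ann. rewrite pol_norm; lra. Qed.

Section Polar.
Variables (a b : R).
Hypothesis Ha : 0 <= a.

Lemma pol_continuity g r t :
  cont2 (ann a b) g -> a < r < b -> continuity_2d_pt (pol g) r t.
Proof.
  intros Hg Hr. unfold pol.
  apply (continuity_2d_pt_comp2 g (fun r' t' => r' * cos t') (fun r' t' => r' * sin t')).
  - apply (cont2_continuity_2d a b); auto using pol_ann.
  - apply continuity_2d_pt_mult; [apply continuity_2d_pt_id1 | apply continuity_2d_pt_cos].
  - apply continuity_2d_pt_mult; [apply continuity_2d_pt_id1 | apply continuity_2d_pt_sin].
Qed.

(* Radial and angular derivatives of [pol f], in terms of the partials fx, fy. *)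
Definition d_rad (fx fy : R -> R -> R) (r t : R) : R := pol fx r t * cos t + pol fy r t * sin t.
Definition d_ang (fx fy : R -> R -> R) (r t : R) : R := r * (pol fy r t * cos t - pol fx r t * sin t).

Lemma pol_derive_r f fx fy r t :
  pd_x (ann a b) f fx -> pd_y (ann a b) f fy -> cont2 (ann a b) fx -> a < r < b ->
  derivable_pt_lim (fun s => pol f s t) r (d_rad fx fy r t).
Proof.
  intros Hfx Hfy Hc Hr.
  assert (Hcos : derivable_pt_lim (fun s => s * cos t) r (cos t)).
  { eapply derivable_pt_lim_eq; [apply (derivable_pt_lim_mult id (fun _ => cos t)) |];
      [apply derivable_pt_lim_id | apply derivable_pt_lim_const | unfold id; ring]. }
  assert (Hsin : derivable_pt_lim (fun s => s * sin t) r (sin t)).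
  { eapply derivable_pt_lim_eq; [apply (derivable_pt_lim_mult id (fun _ => sin t)) |];
      [apply derivable_pt_lim_id | apply derivable_pt_lim_const | unfold id; ring]. }
  exact (derivable_pt_lim_comp_2d f _ _ r _ _ _ _
           (C1_differentiable a b f fx fy _ _ Hfx Hfy Hc (pol_ann a b r t Ha Hr)) Hcos Hsin).
Qed.

Lemma pol_derive_t f fx fy r t :
  pd_x (ann a b) f fx -> pd_y (ann a b) f fy -> cont2 (ann a b) fx -> a < r < b ->
  derivable_pt_lim (fun s => pol f r s) t (d_ang fx fy r t).
Proof.
  intros Hfx Hfy Hc Hr.
  assert (Hcos : derivable_pt_lim (fun s => r * cos s) t (- (r * sin t))).
  { eapply derivable_pt_lim_eq; [apply (derivable_pt_lim_mult (fun _ => r) cos) |];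
      [apply derivable_pt_lim_const | apply derivable_pt_lim_cos | ring]. }
  assert (Hsin : derivable_pt_lim (fun s => r * sin s) t (r * cos t)).
  { eapply derivable_pt_lim_eq; [apply (derivable_pt_lim_mult (fun _ => r) sin) |];
      [apply derivable_pt_lim_const | apply derivable_pt_lim_sin | ring]. }
  eapply derivable_pt_lim_eq.
  - exact (derivable_pt_lim_comp_2d f _ _ t _ _ _ _
             (C1_differentiable a b f fx fy _ _ Hfx Hfy Hc (pol_ann a b r t Ha Hr)) Hcos Hsin).
  - unfold d_ang, pol; ring.
Qed.

End Polar.

Record harmonic_C2 (D : R -> R -> Prop) (w wx wy wxx wxy wyx wyy : R -> R -> R) : Prop := {
  hc_dx : pd_x D w wx;  hc_dy : pd_y D w wy;
  hc_dxx : pd_x D wx wxx;  hc_dxy : pd_y D wx wxy;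
  hc_dyx : pd_x D wy wyx;  hc_dyy : pd_y D wy wyy;
  hc_c : cont2 D w;  hc_cx : cont2 D wx;  hc_cy : cont2 D wy;
  hc_cxx : cont2 D wxx;  hc_cxy : cont2 D wxy;  hc_cyx : cont2 D wyx;  hc_cyy : cont2 D wyy;
  hc_laplace : forall x y, D x y -> wxx x y + wyy x y = 0 }.

Lemma C2_harmonic_data D w wx wy : C2_harmonic D w wx wy ->
  exists wxx wxy wyx wyy, harmonic_C2 D w wx wy wxx wxy wyx wyy.
Proof.
  intros (H1 & H2 & H3 & H4 & H5 & wxx & wxy & wyx & wyy & H6 & H7 & H8 & H9 & H10 & H11 & H12 & H13 & H14).
  exists wxx, wxy, wyx, wyy. constructor; assumption.
Qed.

Section SquareInPolar.
Variables (a b : R) (w wx wy wxx wxy wyx wyy : R -> R -> R).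
Hypothesis Ha : 0 <= a.
Hypothesis Hw : harmonic_C2 (ann a b) w wx wy wxx wxy wyx wyy.

(* First and second radial derivatives of (pol w)^2 ... *)
Definition sq_r (r t : R) : R := 2 * pol w r t * d_rad wx wy r t.
Definition sq_rr (r t : R) : R :=
  2 * d_rad wx wy r t ^ 2 + 2 * pol w r t * (d_rad wxx wxy r t * cos t + d_rad wyx wyy r t * sin t).
(* ... and its first and second angular derivatives. *)
Definition sq_t (r t : R) : R := 2 * pol w r t * d_ang wx wy r t.
Definition sq_tt (r t : R) : R :=
  2 * d_ang wx wy r t ^ 2 + 2 * pol w r t *
    (r * (d_ang wyx wyy r t * cos t - pol wy r t * sin t
          - d_ang wxx wxy r t * sin t - pol wx r t * cos t)).

Lemma sq_derive_r r t : a < r < b ->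
  derivable_pt_lim (fun s => pol w s t ^ 2) r (sq_r r t).
Proof.
  intros Hr. apply (derivable_pt_lim_sq (fun s => pol w s t)), (pol_derive_r a b Ha); auto; apply Hw.
Qed.

Lemma sq_r_derive_r r t : a < r < b -> derivable_pt_lim (fun s => sq_r s t) r (sq_rr r t).
Proof.
  intros Hr. unfold sq_r, sq_rr, d_rad. eapply derivable_pt_lim_eq.
  - repeat first
      [ apply derivable_pt_lim_plus | apply derivable_pt_lim_mult | apply derivable_pt_lim_const
      | apply (pol_derive_r a b Ha); [apply Hw | apply Hw | apply Hw | exact Hr] ].
  - unfold d_rad; ring.
Qed.

Lemma sq_t_derive_t r t : a < r < b -> derivable_pt_lim (fun s => sq_t r s) t (sq_tt r t).
Proof.
  intros Hr. unfold sq_t, sq_tt, d_ang. eapply derivable_pt_lim_eq.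
  - repeat first
      [ apply derivable_pt_lim_plus | apply derivable_pt_lim_minus | apply derivable_pt_lim_opp
      | apply derivable_pt_lim_mult
      | apply derivable_pt_lim_const | apply derivable_pt_lim_cos | apply derivable_pt_lim_sin
      | apply (pol_derive_t a b Ha); [apply Hw | apply Hw | apply Hw | exact Hr] ].
  - unfold d_ang; ring.
Qed.

(* Polar form of the Laplacian: since w is harmonic,
   r (d/dr (r d/dr)) (w^2) + (d/dt)^2 (w^2) = 2 r^2 |grad w|^2. *)
Lemma sq_polar_laplacian r t : a < r < b ->
  r * (sq_r r t + r * sq_rr r t) + sq_tt r t = 2 * r ^ 2 * (pol wx r t ^ 2 + pol wy r t ^ 2).
Proof.
  intros Hr.
  assert (Hlap : pol wxx r t + pol wyy r t = 0) by (apply (hc_laplace _ _ _ _ _ _ _ _ Hw), pol_ann; auto).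
  assert (Hcs : cos t ^ 2 + sin t ^ 2 = 1) by (pose proof (sin2_cos2 t); unfold Rsqr in *; nra).
  unfold sq_r, sq_rr, sq_tt, d_rad, d_ang.
  transitivity (2 * r ^ 2 * (pol wx r t ^ 2 + pol wy r t ^ 2) * (cos t ^ 2 + sin t ^ 2)
                + 2 * pol w r t * r ^ 2 * (pol wxx r t + pol wyy r t) * (cos t ^ 2 + sin t ^ 2)).
  - ring.
  - rewrite Hcs, Hlap. ring.
Qed.

Lemma sq_continuity r t : a < r < b ->
  continuity_2d_pt (fun r' t' => pol w r' t' ^ 2) r t /\ continuity_2d_pt sq_r r t /\
  continuity_2d_pt sq_rr r t /\ continuity_2d_pt sq_tt r t.
Proof.
  intros Hr. unfold sq_r, sq_rr, sq_tt, d_rad, d_ang.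
  repeat split;
  repeat first
    [ apply continuity_2d_pt_plus | apply continuity_2d_pt_minus | apply continuity_2d_pt_opp
    | apply continuity_2d_pt_mult | apply continuity_2d_pt_sq | apply continuity_2d_pt_const
    | apply continuity_2d_pt_id1 | apply continuity_2d_pt_cos | apply continuity_2d_pt_sin
    | apply (pol_continuity a b Ha); [apply Hw | exact Hr] ].
Qed.
End SquareInPolar.

Lemma Dh2_pos_of_jacobian p q r s : p * s - q * r > 0 -> 0 < p ^ 2 + q ^ 2 + r ^ 2 + s ^ 2.
Proof.
  intros H.
  replace (p ^ 2 + q ^ 2 + r ^ 2 + s ^ 2) with ((p - s) ^ 2 + (q + r) ^ 2 + 2 * (p * s - q * r)) by ring.
  pose proof (pow2_ge_0 (p - s)). pose proof (pow2_ge_0 (q + r)). lra.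
Qed.

Section MeanGrowth.
Variables (Rr : R) (u v ux uy vx vy uxx uxy uyx uyy vxx vxy vyx vyy : R -> R -> R).
Hypothesis Hu : harmonic_C2 (ann 1 Rr) u ux uy uxx uxy uyx uyy.
Hypothesis Hv : harmonic_C2 (ann 1 Rr) v vx vy vxx vxy vyx vyy.

Let H01 : 0 <= 1 := Rle_0_1.

(* |h|^2 on the circle of radius r, and its radial and angular derivatives. *)
Definition mod2 (r t : R) : R := pol u r t ^ 2 + pol v r t ^ 2.
Definition mod2_r (r t : R) : R := sq_r u ux uy r t + sq_r v vx vy r t.
Definition mod2_rr (r t : R) : R :=
  sq_rr u ux uy uxx uxy uyx uyy r t + sq_rr v vx vy vxx vxy vyx vyy r t.
Definition mod2_t (r t : R) : R := sq_t u ux uy r t + sq_t v vx vy r t.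
Definition mod2_tt (r t : R) : R :=
  sq_tt u ux uy uxx uxy uyx uyy r t + sq_tt v vx vy vxx vxy vyx vyy r t.
Definition Dh2_pol : R -> R -> R := pol (Dh2 ux uy vx vy).

Lemma mod2_continuity r t : 1 < r < Rr ->
  continuity_2d_pt mod2 r t /\ continuity_2d_pt mod2_r r t /\
  continuity_2d_pt mod2_rr r t /\ continuity_2d_pt mod2_tt r t /\
  continuity_2d_pt Dh2_pol r t.
Proof.
  intros Hr.
  destruct (sq_continuity _ _ _ _ _ _ _ _ _ H01 Hu r t Hr) as (U0 & U1 & U2 & U3).
  destruct (sq_continuity _ _ _ _ _ _ _ _ _ H01 Hv r t Hr) as (V0 & V1 & V2 & V3).
  unfold mod2, mod2_r, mod2_rr, mod2_tt, Dh2_pol, Dh2, pol.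
  repeat split; try (apply continuity_2d_pt_plus; assumption).
  repeat apply continuity_2d_pt_plus; apply continuity_2d_pt_sq, (pol_continuity 1 Rr H01);
    solve [apply Hu | apply Hv | exact Hr].
Qed.

Lemma mod2_cont_on r : 1 < r < Rr ->
  cont_on (mod2 r) 0 (2 * PI) /\ cont_on (mod2_r r) 0 (2 * PI) /\
  cont_on (mod2_rr r) 0 (2 * PI) /\ cont_on (mod2_tt r) 0 (2 * PI) /\
  cont_on (Dh2_pol r) 0 (2 * PI).
Proof.
  intros Hr.
  repeat split; apply cont_on_section; intros t; apply (mod2_continuity r t Hr).
Qed.

(* The second angular derivative integrates to zero over a full turn, by periodicity. *)
Lemma mod2_tt_integral r : 1 < r < Rr -> Rint (mod2_tt r) 0 (2 * PI) = 0.
Proof.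
  intros Hr. pose proof PI_RGT_0.
  rewrite (Rint_FTC (mod2_t r)); try lra.
  - unfold mod2_t, sq_t, d_ang, pol. rewrite cos_2PI, sin_2PI, cos_0, sin_0. ring.
  - intros t _. apply derivable_pt_lim_plus.
    + apply (sq_t_derive_t _ _ _ _ _ _ _ _ _ H01 Hu r t Hr).
    + apply (sq_t_derive_t _ _ _ _ _ _ _ _ _ H01 Hv r t Hr).
  - apply (mod2_cont_on r Hr).
Qed.

(* Integrated over a circle, the polar Laplacian identity gives
   d/dr (r d/dr) of the circle integral of |h|^2 = 2 r x (circle integral of |Dh|^2). *)
Lemma circle_identity r : 1 < r < Rr ->
  Rint (fun t => mod2_r r t + r * mod2_rr r t) 0 (2 * PI) = 2 * r * Rint (Dh2_pol r) 0 (2 * PI).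
Proof.
  intros Hr. pose proof PI_RGT_0.
  destruct (mod2_cont_on r Hr) as (C0 & C1 & C2 & C3 & C4).
  apply Rmult_eq_reg_l with r; [| lra].
  rewrite <- Rint_scal; [| lra | apply cont_on_plus, cont_on_mult; auto using cont_on_const].
  rewrite (Rint_ext _ (fun t => 2 * r ^ 2 * Dh2_pol r t + (-1) * mod2_tt r t)).
  - rewrite Rint_lin, Rint_scal, mod2_tt_integral; auto; try lra.
    apply cont_on_mult; auto using cont_on_const.
  - intros t.
    pose proof (sq_polar_laplacian _ _ _ _ _ _ _ _ _ H01 Hu r t Hr).
    pose proof (sq_polar_laplacian _ _ _ _ _ _ _ _ _ H01 Hv r t Hr).
    unfold mod2_r, mod2_rr, mod2_tt, Dh2_pol, Dh2, pol in *. lra.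
Qed.

(* The derivative of U, and the derivative (1/pi) r int_{|z|=r} |Dh|^2 of rho U'(rho). *)
Definition dU (r : R) : R := / (2 * PI) * Rint (mod2_r r) 0 (2 * PI).
Definition ring_energy (r : R) : R := / PI * (r * Rint (Dh2_pol r) 0 (2 * PI)).

Lemma U_derivable r : 1 < r < Rr -> derivable_pt_lim (U_mean u v) r (dU r).
Proof.
  intros Hr. pose proof PI_RGT_0.
  apply derivable_pt_lim_scal_l.
  apply (param_integral_derivable mod2 _ 1 Rr); auto; try lra.
  - intros r' t Hr'. apply derivable_pt_lim_plus.
    + apply (sq_derive_r _ _ _ _ _ _ _ _ _ H01 Hu r' t Hr').
    + apply (sq_derive_r _ _ _ _ _ _ _ _ _ H01 Hv r' t Hr').
  - intros r' t Hr'. apply (mod2_continuity r' t Hr').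
  - intros r' t Hr'. apply (mod2_continuity r' t Hr').
Qed.

Lemma rdU_derivable r : 1 < r < Rr -> derivable_pt_lim (fun s => s * dU s) r (ring_energy r).
Proof.
  intros Hr. pose proof PI_RGT_0.
  destruct (mod2_cont_on r Hr) as (C0 & C1 & C2 & C3 & C4).
  assert (HdU : derivable_pt_lim dU r
                  (/ (2 * PI) * Rint (mod2_rr r) 0 (2 * PI))).
  { apply derivable_pt_lim_scal_l.
    apply (param_integral_derivable _ _ 1 Rr); auto; try lra.
    - intros r' t Hr'. apply derivable_pt_lim_plus.
      + apply (sq_r_derive_r _ _ _ _ _ _ _ _ _ H01 Hu r' t Hr').
      + apply (sq_r_derive_r _ _ _ _ _ _ _ _ _ H01 Hv r' t Hr').
    - intros r' t Hr'. apply (mod2_continuity r' t Hr').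
    - intros r' t Hr'. apply (mod2_continuity r' t Hr'). }
  eapply derivable_pt_lim_eq; [apply (derivable_pt_lim_mult id dU); [apply derivable_pt_lim_id | exact HdU] |].
  unfold ring_energy, dU, id.
  replace (/ PI * (r * Rint (Dh2_pol r) 0 (2 * PI)))
    with (/ (2 * PI) * (2 * r * Rint (Dh2_pol r) 0 (2 * PI))) by (field; lra).
  rewrite <- (circle_identity r Hr), Rint_lin; auto; lra.
Qed.

Lemma energy_integrand_continuous r : 1 < r < Rr ->
  continuity_pt (fun s => s * Rint (Dh2_pol s) 0 (2 * PI)) r.
Proof.
  intros Hr. apply (continuity_pt_mult id); [apply derivable_continuous_pt, derivable_pt_id |].
  apply (param_integral_continuous _ 1 Rr); try (pose proof PI_RGT_0; lra).
  intros r' t Hr'. apply (mod2_continuity r' t Hr').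
Qed.

Lemma ring_energy_continuous r : 1 < r < Rr -> continuity_pt ring_energy r.
Proof.
  intros Hr. apply (continuity_pt_mult (fun _ => / PI)).
  - apply continuity_pt_const; intros ? ?; reflexivity.
  - apply energy_integrand_continuous, Hr.
Qed.

Hypothesis Hjac : forall x y, ann 1 Rr x y -> ux x y * vy x y - uy x y * vx x y > 0.

Lemma ring_energy_pos r : 1 < r < Rr -> 0 < ring_energy r.
Proof.
  intros Hr. pose proof PI_RGT_0. unfold ring_energy.
  assert (Hint : 0 * (2 * PI - 0) < Rint (Dh2_pol r) 0 (2 * PI)).
  { apply Rint_gt; [lra | apply (mod2_cont_on r Hr) |].
    intros t _. apply Dh2_pos_of_jacobian, Hjac, pol_ann; lra. }
  apply Rmult_lt_0_compat; [apply Rinv_0_lt_compat; lra | apply Rmult_lt_0_compat; lra].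
Qed.

Lemma rdU_increasing r1 r2 : 1 < r1 -> r1 < r2 -> r2 < Rr -> r1 * dU r1 < r2 * dU r2.
Proof.
  intros H1 H2 H3.
  destruct (MVT_cor2 (fun r => r * dU r) ring_energy r1 r2 H2) as [c [Ec Hc]].
  { intros c Hc. apply rdU_derivable; lra. }
  pose proof (ring_energy_pos c ltac:(lra)). nra.
Qed.

Lemma area_int_increment a rho : 1 < a -> a <= rho -> rho < Rr ->
  area_int ux uy vx vy a rho = rho * dU rho - a * dU a.
Proof.
  intros Ha Harho Hrho.
  change (area_int ux uy vx vy a rho)
    with (/ PI * Rint (fun r => r * Rint (Dh2_pol r) 0 (2 * PI)) a rho).
  rewrite <- Rint_scal; [| lra |].
  - apply (Rint_FTC (fun r => r * dU r) ring_energy); [lra | |].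
    + intros r Hr. apply rdU_derivable; lra.
    + intros r Hr. apply ring_energy_continuous; lra.
  - intros r Hr. apply energy_integrand_continuous; lra.
Qed.

Hypothesis Hout : forall x y, ann 1 Rr x y -> 1 < sqrt (u x y ^ 2 + v x y ^ 2).

Lemma U_gt_1 r : 1 < r < Rr -> 1 < U_mean u v r.
Proof.
  intros Hr. pose proof PI_RGT_0.
  assert (Hint : 1 * (2 * PI - 0) < Rint (mod2 r) 0 (2 * PI)).
  { apply Rint_gt; [lra | apply (mod2_cont_on r Hr) |].
    intros t _. unfold mod2, pol.
    pose proof (Hout _ _ (pol_ann 1 Rr r t H01 Hr)) as Hs.
    destruct (Rle_dec (u (r * cos t) (r * sin t) ^ 2 + v (r * cos t) (r * sin t) ^ 2) 1) as [Hle|]; [|lra].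
    apply sqrt_le_1_alt in Hle. rewrite sqrt_1 in Hle. lra. }
  change (U_mean u v r) with (/ (2 * PI) * Rint (mod2 r) 0 (2 * PI)).
  apply Rmult_lt_reg_l with (2 * PI); [lra |].
  rewrite <- Rmult_assoc, Rinv_r; lra.
Qed.

Hypothesis Hbd : forall eps, 0 < eps -> exists delta, 0 < delta /\
  forall x y, ann 1 Rr x y -> sqrt (x ^ 2 + y ^ 2) < 1 + delta ->
    Rabs (sqrt (u x y ^ 2 + v x y ^ 2) - 1) < eps.

Lemma U_near_1 c : 0 < c -> exists delta, 0 < delta /\
  forall r, 1 < r < Rr -> r < 1 + delta -> U_mean u v r <= 1 + c.
Proof.
  intros Hc. pose proof PI_RGT_0.
  set (e := Rmin 1 (c / 3)).
  assert (He : 0 < e) by (apply Rmin_pos; lra).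
  assert (He1 : e <= 1) by apply Rmin_l. assert (He3 : e <= c / 3) by apply Rmin_r.
  assert (Hec : (1 + e) ^ 2 <= 1 + c) by nra.
  destruct (Hbd e He) as [d [Hd Hclose]]. exists d; split; [exact Hd |]. intros r Hr Hrd.
  assert (Hint : Rint (mod2 r) 0 (2 * PI) <= Rint (fun _ => 1 + c) 0 (2 * PI)).
  { apply Rint_le; [lra | apply (mod2_cont_on r Hr) | apply cont_on_const |].
    intros t _. unfold mod2, pol.
    assert (Hann : ann 1 Rr (r * cos t) (r * sin t)) by (apply pol_ann; lra).
    pose proof (Hclose _ _ Hann ltac:(rewrite pol_norm; lra)) as Hs.
    set (m := u (r * cos t) (r * sin t) ^ 2 + v (r * cos t) (r * sin t) ^ 2) in *.
    assert (Hm : 0 <= m) by (unfold m; pose proof (pow2_ge_0 (u (r * cos t) (r * sin t)));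
                             pose proof (pow2_ge_0 (v (r * cos t) (r * sin t))); lra).
    apply Rabs_def2 in Hs. rewrite <- (sqrt_sqrt m Hm). pose proof (sqrt_pos m). nra. }
  rewrite Rint_const in Hint.
  change (U_mean u v r) with (/ (2 * PI) * Rint (mod2 r) 0 (2 * PI)).
  apply Rmult_le_reg_l with (2 * PI); [lra |].
  rewrite <- Rmult_assoc, Rinv_r; lra.
Qed.

(* Hence rho U'(rho) >= 0: otherwise U' < 0 near 1 and U could not decrease to 1. *)
Lemma rdU_nonneg r : 1 < r < Rr -> 0 <= r * dU r.
Proof.
  intros Hr. destruct (Rle_dec 0 (r * dU r)) as [| Hneg]; [assumption | exfalso].
  assert (Hdec : forall s, 1 < s < r -> U_mean u v r < U_mean u v s).
  { intros s Hs. destruct (MVT_cor2 (U_mean u v) dU s r ltac:(lra)) as [xi [Exi Hxi]].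
    { intros x Hx. apply U_derivable; lra. }
    pose proof (rdU_increasing xi r ltac:(lra) ltac:(lra) ltac:(lra)).
    assert (dU xi < 0) by nra. nra. }
  pose proof (U_gt_1 r Hr).
  destruct (U_near_1 ((U_mean u v r - 1) / 2) ltac:(lra)) as [d [Hd Hnear]].
  set (s := Rmin (1 + d / 2) ((1 + r) / 2)).
  assert (Hs1 : s <= 1 + d / 2) by apply Rmin_l.
  assert (Hs2 : s <= (1 + r) / 2) by apply Rmin_r.
  assert (Hs : 1 < s < r) by (split; [apply Rmin_glb_lt | ]; lra).
  pose proof (Hdec s Hs). pose proof (Hnear s ltac:(lra) ltac:(lra)). lra.
Qed.
End MeanGrowth.

Theorem mainTheorem6 (Rr : R) (u v ux uy vx vy : R -> R -> R) :
  1 < Rr -> in_H_star Rr u v ux uy vx vy ->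
  exists dU : R -> R,
    (forall rho, 1 < rho < Rr -> derivable_pt_lim (U_mean u v) rho (dU rho)) /\
    (forall r1 r2, 1 < r1 -> r1 < r2 -> r2 < Rr -> r1 * dU r1 < r2 * dU r2) /\
    (forall rho, 1 < rho < Rr -> 1 < U_mean u v rho) /\
    exists dU1 : R,
      limit1_in (fun rho => rho * dU rho) (fun rho => 1 < rho < Rr) dU1 1 /\
      0 <= dU1 /\
      (forall rho, 1 < rho < Rr ->
         limit1_in (fun a => area_int ux uy vx vy a rho) (fun a => 1 < a < rho)
                   (rho * dU rho - dU1) 1).
Proof.
  intros HRr (Hu0 & Hv0 & _ & _ & Hjac & Hout & Hbd).
  destruct (C2_harmonic_data _ _ _ _ Hu0) as (uxx & uxy & uyx & uyy & Hu).
  destruct (C2_harmonic_data _ _ _ _ Hv0) as (vxx & vxy & vyx & vyy & Hv).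
  pose proof (rdU_increasing _ _ _ _ _ _ _ _ _ _ _ _ _ _ _ Hu Hv Hjac) as Hinc.
  destruct (increasing_limit_left (fun r => r * dU u v ux uy vx vy r) 1 Rr HRr Hinc
              (rdU_nonneg _ _ _ _ _ _ _ _ _ _ _ _ _ _ _ Hu Hv Hjac Hout Hbd)) as [L [HL0 HL]].
  exists (dU u v ux uy vx vy). split; [| split; [| split]].
  - exact (U_derivable _ _ _ _ _ _ _ _ _ _ _ _ _ _ _ Hu Hv).
  - exact Hinc.
  - exact (U_gt_1 _ _ _ _ _ _ _ _ _ _ _ _ _ _ _ Hu Hv Hout).
  - exists L. split; [apply HL; lra | split; [exact HL0 |]].
    intros rho Hrho. apply (limit1_in_shift_opp _ (fun r => r * dU u v ux uy vx vy r)).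
    + intros a Ha. apply (area_int_increment _ _ _ _ _ _ _ _ _ _ _ _ _ _ _ Hu Hv); lra.
    + apply HL; lra.
Qed.
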